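(* Let $n\ge1$, $k\ge1$, let $t\neq0$, and let $a_1,\dots,a_n>0$ be pairwise distinct. Then \[ \theta_{n;k}(t)=(-1)^{n-1}\sum_{j=1}^{n}\frac{\prod_{m=1}^{n}\big(\frac{1-t}{a_j t}+\frac1{a_m}\big)}{\prod_{\ell=1,\ell\neq j}^{n}\big(\frac1{a_j}-\frac1{a_\ell}\big)}\;a_j^{k+1}\,t^{k}. \]
   Context: Let $\boldsymbol a=(a_j)_{j\ge1}$ be a sequence of positive reals. For integers $n\ge1$, $k\ge0$ let $\mathcal M_{n,k}=\{(\ell_1,\dots,\ell_k)\in\mathbb N^k: n\ge\ell_1\ge\cdots\ge\ell_k\ge1\}$. For $\vec\ell\in\mathcal M_{n,k}$ let $\sigma(\vec\ell)=|\{1\le j\le k-1:\ell_j=\ell_{j+1}\}|$ and $w(\vec\ell)=\prod_{j=1}^k a_{\ell_j}$. Define $\theta_{n;k}(t)=\sum_{\vec\ell\in\mathcal M_{n,k}}w(\vec\ell)\,t^{\sigma(\vec\ell)}$. *)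

From HB Require Import structures.
From mathcomp Require Import all_boot all_order all_algebra.
Set Implicit Arguments. Unset Strict Implicit. Unset Printing Implicit Defensive.
Import Order.TTheory GRing.Theory Num.Theory.
Local Open Scope ring_scope.

(* The sequence a = (a_j)_{j>=1} is a function a : nat -> R; only a_1, a_2, ... matter. *)

(* Membership in M_{n,k}: a k-tuple (l_1,...,l_k) of naturals with
   n >= l_1 >= ... >= l_k >= 1.  Entries are drawn from 'I_n.+1 = {0..n},
   so l_j <= n is automatic; we require l_j >= 1 and weak decrease. *)
Definition inM (n k : nat) (l : k.-tuple 'I_n.+1) : bool :=
  all (fun x : 'I_n.+1 => (0 < x)%N) l &&
  sorted (fun x y : nat => (y <= x)%N) (map (@nat_of_ord n.+1) l).

Definition sigma (l : seq nat) : nat :=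
  count (fun p : nat * nat => p.1 == p.2) (zip l (behead l)).

Definition weight (R : nzRingType) (a : nat -> R) (l : seq nat) : R :=
  \prod_(x <- l) a x.

Definition theta (R : nzRingType) (a : nat -> R) (n k : nat) (t : R) : R :=
  \sum_(l : k.-tuple 'I_n.+1 | inM l)
    weight a (map (@nat_of_ord n.+1) l) * t ^+ sigma (map (@nat_of_ord n.+1) l).

From HB Require Import structures.
From mathcomp Require Import all_boot all_order all_algebra ring.
Set Implicit Arguments. Unset Strict Implicit. Unset Printing Implicit Defensive.
Import Order.TTheory GRing.Theory Num.Theory.
Local Open Scope ring_scope.

(* Let theta_x(k) be theta restricted to tuples with l_1 <= x.  Splitting off l_1 gives
   theta_{x+1}(1) = theta_x(1) + a_{x+1} and
   theta_{x+1}(k+2) = theta_x(k+2) + a_{x+1} t theta_{x+1}(k+1) + a_{x+1} (1-t) theta_x(k+1).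
   With b_m = a_{m+1} and c = (1-t)/t, the power sums U_x(k) = sum_{j<x} R_{x,j} (b_j t)^k,
   where R_{x,j} = t^-1 prod_{m<x, m<>j} (b_j + c b_m)/(b_j - b_m), satisfy the same
   recurrence, given U_x(0) = 1 - ((t-1)/t)^x.  That value is the case z = 0 of the
   partial-fraction expansion
     prod_{m<x} (1 + (1-t) b_m z)/(1 - b_m t z) = ((t-1)/t)^x + sum_{j<x} R_{x,j}/(1 - b_j t z),
   proved by induction on x: the new coefficient R_{x+1,x} is the product for x evaluated
   at z = 1/(b_x t). *)

Section ThetaRecurrence.
Variables (R : comNzRingType) (a : nat -> R) (n : nat) (t : R).
Local Notation T := 'I_n.+1.
Local Notation vals l := (map (@nat_of_ord n.+1) l).

Definition inM_upto (x : nat) k (l : k.-tuple T) : bool :=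
  inM l && all (fun y : T => (y <= x)%N) l.

Lemma inM_upto_cons x k (y : T) (l : k.-tuple T) :
  inM_upto x [tuple of y :: l] = (0 < y <= x)%N && inM_upto y l.
Proof.
have geq_trans : transitive (fun p q : nat => (q <= p)%N).
  by move=> p q r /= hpq hrp; exact: leq_trans hrp hpq.
rewrite /inM_upto /inM /= path_sortedE // all_map.
case: (leqP y x) => [hyx|]; last by rewrite !(andbF, andFb).
case hl: (all (preim _ _) l); last by rewrite !andbF.
have -> : all (fun z : T => (z <= x)%N) l.
  by apply/allP => z /(allP hl) /= hzy; exact: leq_trans hzy hyx.
by rewrite !andbT; case: (0 < y)%N; case: (all _ _); case: (sorted _ _).
Qed.

Lemma sum_inM_upto_cons x k (F : seq nat -> R) :
  \sum_(l : k.+1.-tuple T | inM_upto x l) F (vals l) =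
  \sum_(y : T | (0 < y <= x)%N) \sum_(l : k.-tuple T | inM_upto y l) F (nat_of_ord y :: vals l).
Proof.
rewrite pair_big_dep /=.
rewrite (reindex (fun p : T * k.-tuple T => [tuple of p.1 :: p.2])) /=.
  by apply: eq_bigl => -[y l] /=; rewrite inM_upto_cons.
exists (fun l : k.+1.-tuple T => (thead l, [tuple of behead l])).
  by move=> [y l] _ /=; rewrite theadE; congr pair; apply: val_inj.
by move=> l _ /=; apply: val_inj => /=; case: l => -[|? ?].
Qed.

Definition theta_upto x k : R :=
  \sum_(l : k.-tuple T | inM_upto x l) weight a (vals l) * t ^+ sigma (vals l).

Definition theta_after p k : R :=
  \sum_(l : k.-tuple T | inM_upto p l) weight a (vals l) * t ^+ sigma (p :: vals l).

Lemma theta_upto_S x k :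
  theta_upto x k.+1 = \sum_(y : T | (0 < y <= x)%N) a y * theta_after y k.
Proof.
rewrite /theta_upto (sum_inM_upto_cons x k (fun s => weight a s * t ^+ sigma s)).
apply: eq_bigr => y _.
rewrite big_distrr; apply: eq_bigr => l _.
by rewrite /= /weight big_cons mulrA.
Qed.

Lemma theta_after_S p k :
  theta_after p k.+1 = \sum_(y : T | (0 < y <= p)%N) a y * t ^+ (p == y) * theta_after y k.
Proof.
rewrite /theta_after (sum_inM_upto_cons p k (fun s => weight a s * t ^+ sigma (p :: s))).
apply: eq_bigr => y _.
rewrite big_distrr; apply: eq_bigr => l _.
by rewrite /= /weight big_cons [sigma _]/= exprD; ring.
Qed.

Lemma theta_after0 p : theta_after p 0 = 1.
Proof.
rewrite /theta_after (big_pred1 [tuple]) => [|l]; last by rewrite tuple0.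
by rewrite /weight big_nil mul1r.
Qed.

Lemma theta_upto_0S k : theta_upto 0 k.+1 = 0.
Proof. by rewrite theta_upto_S big_pred0 // => y; case: (nat_of_ord y). Qed.

Lemma sum_upto_S x (f : T -> R) : (x < n)%N ->
  \sum_(y : T | (0 < y <= x.+1)%N) f y =
  \sum_(y : T | (0 < y <= x)%N) f y + f (inord x.+1).
Proof.
move=> hx; have hi : nat_of_ord (inord x.+1 : T) = x.+1 by rewrite inordK.
rewrite (bigD1 (inord x.+1)) /=; last by rewrite hi leqnn.
rewrite addrC; congr (_ + _).
apply: eq_bigl => y; rewrite -val_eqE /= hi.
by case: (nat_of_ord y) => [|m] //=; rewrite eqSS ltnS ltn_neqAle andbC.
Qed.

Lemma theta_upto_SS x k : (x < n)%N ->
  theta_upto x.+1 k.+1 = theta_upto x k.+1 + a x.+1 * theta_after x.+1 k.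
Proof. by move=> hx; rewrite !theta_upto_S sum_upto_S // inordK. Qed.

Lemma theta_after_SS x k : (x < n)%N ->
  theta_after x.+1 k.+1 = theta_upto x k.+1 + t * (a x.+1 * theta_after x.+1 k).
Proof.
move=> hx; rewrite theta_after_S sum_upto_S // inordK // eqxx theta_upto_S.
congr (_ + _); last by ring.
apply: eq_bigr => y /andP[_ hy].
by rewrite gtn_eqF ?mulr1 // ltnS.
Qed.

Lemma theta_upto_S1 x : (x < n)%N -> theta_upto x.+1 1 = theta_upto x 1 + a x.+1.
Proof. by move=> hx; rewrite theta_upto_SS // theta_after0 mulr1. Qed.

Lemma theta_upto_S2 x k : (x < n)%N ->
  theta_upto x.+1 k.+2 =
  theta_upto x k.+2 + a x.+1 * t * theta_upto x.+1 k.+1 + a x.+1 * (1 - t) * theta_upto x k.+1.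
Proof.
move=> hx; rewrite theta_upto_SS // theta_after_SS // (theta_upto_SS k hx); ring.
Qed.

Lemma theta_upto_n k : theta_upto n k = theta a n k t.
Proof.
apply: eq_bigl => l; apply/andb_idr => _.
by apply/allP => y _; rewrite -ltnS.
Qed.

End ThetaRecurrence.

Section PartialFractions.
Variables (F : fieldType) (t : F).
Hypothesis t_neq0 : t != 0.
Local Notation c := ((1 - t) / t).
Local Notation q := ((t - 1) / t).

Lemma pf_factor_split (v z : F) : 1 - v * t * z != 0 ->
  (1 + (1 - t) * v * z) / (1 - v * t * z) = q + t^-1 / (1 - v * t * z).
Proof. by move=> hz; field; rewrite hz t_neq0. Qed.

Lemma pf_term_split (u v z : F) : v != 0 -> u != v ->
    1 - u * t * z != 0 -> 1 - v * t * z != 0 ->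
  (1 + (1 - t) * v * z) / (1 - v * t * z) / (1 - u * t * z) =
  (u + c * v) / (u - v) / (1 - u * t * z) + t^-1 / (1 - u * t * (v * t)^-1) / (1 - v * t * z).
Proof.
move=> hv huv hu hvz.
have huv' : u - v != 0 by rewrite subr_eq0.
have hvu : v - u != 0 by rewrite subr_eq0 eq_sym.
by field; rewrite hu hvz t_neq0 hv huv' hvu.
Qed.

Lemma pf_ratio_rec (u v : F) : u != v ->
  (u + c * v) / (u - v) * (u * t) = u * t + v * t * ((u + c * v) / (u - v)) + v * (1 - t).
Proof.
by move=> huv; field; rewrite subr_eq0 huv t_neq0.
Qed.

Lemma pf_ratio_inv (u v : F) : u != 0 -> v != 0 -> u != v ->
  (u + c * v) / (u - v) = - (((1 - t) / (u * t) + 1 / v) / (1 / u - 1 / v)).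
Proof.
move=> hu hv huv; have huv' : u - v != 0 by rewrite subr_eq0.
have hvu : v - u != 0 by rewrite subr_eq0 eq_sym.
by field; rewrite mulN1r hu hv hvu huv' t_neq0.
Qed.

Variables (b : nat -> F) (n : nat).
Hypothesis b_neq0 : forall m, (m < n)%N -> b m != 0.
Hypothesis b_inj : forall i j, (i < n)%N -> (j < n)%N -> i != j -> b i != b j.

Definition pf_coef x j : F :=
  t^-1 * \prod_(0 <= m < x | m != j) ((b j + c * b m) / (b j - b m)).

Definition pf_prod x z : F :=
  \prod_(0 <= m < x) ((1 + (1 - t) * b m * z) / (1 - b m * t * z)).

Definition pf_expansion x z : F :=
  q ^+ x + \sum_(0 <= j < x) pf_coef x j / (1 - b j * t * z).

Definition pf_power_sum x k : F := \sum_(0 <= j < x) pf_coef x j * (b j * t) ^+ k.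

Lemma pf_coef_S x j : (j < x)%N ->
  pf_coef x.+1 j = pf_coef x j * ((b j + c * b x) / (b j - b x)).
Proof. by move=> hj; rewrite /pf_coef big_mkcond big_nat_recr //= -big_mkcond gtn_eqF //= !mulrA. Qed.

Lemma pf_coef_last x : (x < n)%N -> pf_coef x.+1 x = t^-1 * pf_prod x (b x * t)^-1.
Proof.
move=> hx; rewrite /pf_coef big_mkcond big_nat_recr //= eqxx mulr1 -big_mkcond /=.
congr (_ * _); rewrite /pf_prod big_nat_cond [RHS]big_nat_cond.
apply: eq_big => [i|i /andP[/andP[_ hi] _]].
  by rewrite andbT; apply/andb_idr => /andP[_ /ltn_eqF ->].
have hbx := b_neq0 hx.
have hxi : b x - b i != 0.
  by rewrite subr_eq0 b_inj ?gtn_eqF // (ltn_trans hi hx).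
by field; rewrite hbx hxi t_neq0.
Qed.

Lemma pf_prod_expansion x z : (x <= n)%N ->
  (forall j, (j < x)%N -> 1 - b j * t * z != 0) -> pf_prod x z = pf_expansion x z.
Proof.
elim: x z => [|x IH] z hx hz; first by rewrite /pf_prod /pf_expansion !big_geq // expr0 addr0.
have hbx : b x != 0 := b_neq0 hx.
have hzx : 1 - b x * t * z != 0 := hz x (ltnSn x).
have b_neq_bx j : (j < x)%N -> b j != b x.
  by move=> hj; rewrite b_inj ?ltn_eqF // (ltn_trans hj hx).
have hz0 j : (j < x)%N -> 1 - b j * t * (b x * t)^-1 != 0.
  move=> hj; have -> : 1 - b j * t * (b x * t)^-1 = (b x - b j) / b x by field; rewrite hbx t_neq0.
  by rewrite mulf_neq0 ?invr_neq0 // subr_eq0 eq_sym b_neq_bx.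
rewrite /pf_prod big_nat_recr //= -/(pf_prod x z) IH ?(ltnW hx) //; last first.
  by move=> j /ltnW; apply: hz.
rewrite {2}/pf_expansion big_nat_recr //= pf_coef_last // (IH _ (ltnW hx) hz0) /pf_expansion.
have split_j j : (j < x)%N ->
    pf_coef x j / (1 - b j * t * z) * ((1 + (1 - t) * b x * z) / (1 - b x * t * z)) =
    pf_coef x.+1 j / (1 - b j * t * z) +
    t^-1 * (pf_coef x j / (1 - b j * t * (b x * t)^-1)) / (1 - b x * t * z).
  move=> hj; rewrite pf_coef_S // -mulrA [X in _ * X = _]mulrC.
  rewrite pf_term_split ?b_neq_bx ?(hz j (ltnW hj)) //; ring.
rewrite mulrDl big_distrl /=.
under eq_big_nat => j /andP[_ hj] do rewrite split_j //.
rewrite big_split /= (pf_factor_split hzx).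
rewrite -mulr_suml -mulr_sumr exprS; ring.
Qed.

Lemma pf_power_sum0 x : (x <= n)%N -> pf_power_sum x 0 = 1 - q ^+ x.
Proof.
move=> hx; have hz j : (j < x)%N -> 1 - b j * t * 0 != 0 by rewrite mulr0 subr0 oner_eq0.
have := pf_prod_expansion hx hz.
rewrite /pf_prod /pf_expansion big1 => [|m _]; last by rewrite !mulr0 addr0 subr0 divr1.
move=> /eqP; rewrite addrC -subr_eq => /eqP ->.
by apply: eq_bigr => j _; rewrite mulr0 subr0 divr1 expr0 mulr1.
Qed.

Lemma pf_power_sum_S x k : (x < n)%N ->
  pf_power_sum x.+1 k.+1 =
  pf_power_sum x k.+1 + b x * t * pf_power_sum x.+1 k + b x * (1 - t) * pf_power_sum x k.
Proof.
move=> hx; rewrite /pf_power_sum !big_nat_recr //=.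
under eq_big_nat => j /andP[_ hj] do rewrite pf_coef_S //.
under [in X in _ = _ + _ * (X + _) + _]eq_big_nat => j /andP[_ hj] do rewrite pf_coef_S //.
have step j : (j < x)%N ->
    pf_coef x j * ((b j + c * b x) / (b j - b x)) * (b j * t) ^+ k.+1 =
    pf_coef x j * (b j * t) ^+ k.+1 +
    b x * t * (pf_coef x j * ((b j + c * b x) / (b j - b x)) * (b j * t) ^+ k) +
    b x * (1 - t) * (pf_coef x j * (b j * t) ^+ k).
  move=> hj; have hjx : b j != b x by rewrite b_inj ?ltn_eqF // (ltn_trans hj hx).
  transitivity
    (pf_coef x j * (b j * t) ^+ k * ((b j + c * b x) / (b j - b x) * (b j * t))).
    by rewrite exprSr; ring.
  by rewrite pf_ratio_rec // exprSr; ring.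
under eq_big_nat => j /andP[_ hj] do rewrite step //.
rewrite !big_split /= -!mulr_sumr exprS; ring.
Qed.

Lemma eq_pf_power_sum (f : nat -> nat -> F) :
  (forall k, f 0%N k.+1 = 0) ->
  (forall x, (x < n)%N -> f x.+1 1%N = f x 1%N + b x) ->
  (forall x k, (x < n)%N ->
     f x.+1 k.+2 = f x k.+2 + b x * t * f x.+1 k.+1 + b x * (1 - t) * f x k.+1) ->
  forall x, (x <= n)%N -> forall k, f x k.+1 = pf_power_sum x k.+1.
Proof.
move=> f0 f1 f2; elim=> [|x IH] hx k; first by rewrite f0 /pf_power_sum big_geq.
elim: k => [|k IHk]; last by rewrite f2 // IHk !IH ?(ltnW hx) // (pf_power_sum_S k.+1).
rewrite f1 // IH ?(ltnW hx) // pf_power_sum_S // !pf_power_sum0 ?(ltnW hx) //.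
by rewrite exprS; field.
Qed.

Lemma pf_coef_closed (j : 'I_n) k :
  pf_coef n j * (b j * t) ^+ k =
  (-1) ^+ (n - 1) *
  ((\prod_(m < n) ((1 - t) / (b j * t) + 1 / b m)) /
   (\prod_(l < n | l != j) (1 / b j - 1 / b l)) * b j ^+ k.+1 * t ^+ k).
Proof.
have hbj : b j != 0 := b_neq0 (ltn_ord j).
rewrite /pf_coef big_mkord (eq_bigl (fun i : 'I_n => i != j)) //.
have bj_neq_bi (i : 'I_n) : i != j -> b j != b i.
  by move=> hij; rewrite b_inj // eq_sym.
under eq_bigr => i /bj_neq_bi hij do rewrite (pf_ratio_inv hbj (b_neq0 (ltn_ord i)) hij).
rewrite prodrN cardC1 card_ord subn1 [\prod_(m < n) _](bigD1 j) //= prodf_div.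
have restrict (G : 'I_n -> F) :
  \prod_(i in (fun i : 'I_n => i != j)) G i = \prod_(i < n | i != j) G i by apply: eq_bigl.
rewrite !restrict (restrict (fun i => 1 / b j - 1 / b i)).
have hD : \prod_(i < n | i != j) (1 / b j - 1 / b i) != 0.
  apply/prodf_neq0 => i hij.
  by rewrite subr_eq0 !div1r (inj_eq (can_inj (@invrK _))) bj_neq_bi.
rewrite exprMn (exprS (b j) k).
by field; rewrite hD hbj t_neq0.
Qed.

End PartialFractions.

Theorem mainTheorem5 (R : realFieldType) (a : nat -> R) (n k : nat) (t : R)
  (hn : (1 <= n)%N) (hk : (1 <= k)%N) (ht : t != 0)
  (hpos : forall j : nat, (1 <= j <= n)%N -> 0 < a j)
  (hdist : forall i j : nat, (1 <= i <= n)%N -> (1 <= j <= n)%N -> i != j -> a i != a j) :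
  theta a n k t =
  (-1) ^+ (n - 1) *
  \sum_(j < n)
    ((\prod_(m < n) ((1 - t) / (a j.+1 * t) + 1 / a m.+1)) /
     (\prod_(l < n | l != j) (1 / a j.+1 - 1 / a l.+1))
     * a j.+1 ^+ k.+1 * t ^+ k).
Proof.
pose b m := a m.+1.
have b_neq0 m : (m < n)%N -> b m != 0 by move=> hm; rewrite gt_eqF // hpos.
have b_inj i j : (i < n)%N -> (j < n)%N -> i != j -> b i != b j.
  by move=> hi hj hij; rewrite hdist.
case: k hk => // k _.
rewrite -theta_upto_n (eq_pf_power_sum ht b_neq0 b_inj (f := theta_upto a n t)) //.
- rewrite /pf_power_sum big_mkord mulr_sumr; apply: eq_bigr => j _.
  exact: pf_coef_closed.
- exact: theta_upto_0S.
- exact: theta_upto_S1.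
- exact: theta_upto_S2.
Qed.
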